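(* Let $G$ be a relation on a finite set $K$ with $Dom(G)=K$. (a) For $\mathbf{s}\in K_G$ there exist a $G$ basic set $B$ and $k\in\mathbb{Z}_+$ such that $s_i\in B$ and $S^i(\mathbf{s})\in B_G$ for all $i\ge k$; this $B$ is denoted $End(\mathbf{s})$, and $\omega S(\mathbf{s})\subset B_G$. (b) If $B$ is a $G$ basic set then $B_G$ is an $S$ basic set of $(K_G,S)$ and $S|_{B_G}$ is topologically transitive; moreover $B\mapsto B_G$ is a bijection from the $G$ basic sets onto the $S$ basic sets in $K_G$. (c) For $A\subset K$: $\mathcal{O}G(A)\subset A$ iff for all $\mathbf{s}\in K_G$, ($\mathbf{s}\in A_G\Leftrightarrow s_0\in A$). These conditions imply that $\mathcal{C}S(A_G)\subset A_G$, that $A_G$ is clopen in $K_G$, and that $\{\mathbf{s}:End(\mathbf{s})\subset A\}$ is open in $K_G$. (d) For every $s\in K$ there is $\mathbf{s}\in K_G$ with $s_0=s$ and $End(\mathbf{s})$ a terminal $G$ basic set. (e) For a $G$ basic set $B$ the following are equivalent: (i) $B$ is a terminal $G$ basic set; (ii) $B_G$ is a terminal $S$ basic set; (iii) $B_G$ is a visible $S$ basic set; (iv) $B_G$ is clopen in $K_G$; (v) $B_G$ is an attractor for $S$; (vi) $\{\mathbf{s}:End(\mathbf{s})=B\}$ is open in $K_G$. (f) $\{\mathbf{s}\in K_G:End(\mathbf{s})$ is a terminal $G$ basic set$\}$ is a dense open subset of $K_G$.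
   Context: $K$ is a finite set, $G\subset K\times K$ a relation, $Dom(G)=\{s:\exists t,(s,t)\in G\}$. $K^{\mathbb{Z}_+}$ carries the metric $d(\mathbf{s},\mathbf{t})=\inf\{1/(k+1): s_i=t_i\ \forall i<k\}$ and the shift $S(\mathbf{s})_i=s_{i+1}$. $K_G=\{\mathbf{s}\in K^{\mathbb{Z}_+}:(s_i,s_{i+1})\in G\ \forall i\}$, with $S$ restricted to it; for $A\subset K$, $A_G=K_G\cap A^{\mathbb{Z}_+}$. $\mathcal{O}G=\bigcup_{n\ge1}G^n$ (relational powers). $G$ basic sets are the equivalence classes of $\{s:(s,s)\in\mathcal{O}G\}$ under ''$(s,t)\in\mathcal{O}G$ and $(t,s)\in\mathcal{O}G$''; a $G$ basic set $B$ is terminal if $\mathcal{O}G(B)\subset B$. For the map $S$ on the compact metric space $K_G$: $\mathcal{C}S$ is the chain relation ($(x,y)\in\mathcal{C}S$ iff for all $\epsilon>0$ there is an $\epsilon$-chain $x=x_0,\dots,x_n=y$, $n\ge1$, $d(S(x_i),x_{i+1})\le\epsilon$), $S$ basic sets are equivalence classes of chain recurrent points under mutual chain reachability, terminal means $\mathcal{C}S(B)\subset B$, $\omega S(\mathbf{s})$ is the limit set of the forward orbit, the basin of $B$ is $\operatorname{int}\{\mathbf{s}:\omega S(\mathbf{s})\subset B\}$, visible means nonempty basin, and an attractor is $\bigcap_{n\ge0}S^n(U)$ for a closed $U$ with $S(U)\subset\operatorname{int}U$. *)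

From mathcomp Require Import all_boot.
Set Implicit Arguments. Unset Strict Implicit. Unset Printing Implicit Defensive.

Definition shift (K : Type) (x : nat -> K) : nat -> K := fun i => x i.+1.
Definition shiftn (K : Type) (n : nat) (x : nat -> K) : nat -> K := fun i => x (n + i).

(* close k x y  <->  x_i = y_i for all i < k  <->  d(x,y) <= 1/(k+1)
   for the metric d(x,y) = inf{1/(k+1) : x_i = y_i for all i < k}. *)
Definition close (K : Type) (k : nat) (x y : nat -> K) : Prop :=
  forall i, (i < k)%N -> x i = y i.

Definition inKG (K : Type) (G : K -> K -> Prop) (x : nat -> K) : Prop :=
  forall i, G (x i) (x i.+1).

Definition restrG (K : Type) (G : K -> K -> Prop) (A : K -> Prop) (x : nat -> K) : Prop :=
  inKG G x /\ forall i, A (x i).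

Fixpoint relpow (K : Type) (G : K -> K -> Prop) (n : nat) : K -> K -> Prop :=
  match n with
  | 0 => fun s t => s = t
  | n'.+1 => fun s t => exists u, relpow G n' s u /\ G u t
  end.

Definition OG (K : Type) (G : K -> K -> Prop) (s t : K) : Prop :=
  exists n, relpow G n.+1 s t.

Definition Gbasic (K : Type) (G : K -> K -> Prop) (B : K -> Prop) : Prop :=
  exists s, OG G s s /\
    forall t, B t <-> (OG G t t /\ OG G s t /\ OG G t s).

Definition Gterminal (K : Type) (G : K -> K -> Prop) (B : K -> Prop) : Prop :=
  Gbasic G B /\ forall s t, B s -> OG G s t -> B t.

(* an eps-chain with eps = 1/(k+1): points c 0 = x, ..., c n = y in K_G,
   n >= 1, with d(S(c i), c (i+1)) <= 1/(k+1) *)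
Definition chain (K : Type) (G : K -> K -> Prop) (k : nat) (x y : nat -> K) : Prop :=
  exists n (c : nat -> nat -> K),
    (0 < n)%N /\ c 0 = x /\ c n = y /\
    (forall i, (i <= n)%N -> inKG G (c i)) /\
    (forall i, (i < n)%N -> close k (shift (c i)) (c i.+1)).

(* CS: for every eps > 0 there is an eps-chain (eps = 1/(k+1) is cofinal) *)
Definition CS (K : Type) (G : K -> K -> Prop) (x y : nat -> K) : Prop :=
  forall k, chain G k x y.

Definition Sbasic (K : Type) (G : K -> K -> Prop) (C : (nat -> K) -> Prop) : Prop :=
  exists x, inKG G x /\ CS G x x /\
    forall y, C y <-> (inKG G y /\ CS G y y /\ CS G x y /\ CS G y x).

Definition Sterminal (K : Type) (G : K -> K -> Prop) (C : (nat -> K) -> Prop) : Prop :=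
  Sbasic G C /\ forall x y, C x -> CS G x y -> C y.

Definition omega (K : Type) (x y : nat -> K) : Prop :=
  forall k N, exists n, (N <= n)%N /\ close k (shiftn n x) y.

Definition openKG (K : Type) (G : K -> K -> Prop) (U : (nat -> K) -> Prop) : Prop :=
  forall x, inKG G x -> U x ->
    exists k, forall y, inKG G y -> close k x y -> U y.

Definition closedKG (K : Type) (G : K -> K -> Prop) (U : (nat -> K) -> Prop) : Prop :=
  openKG G (fun x => ~ U x).

Definition clopenKG (K : Type) (G : K -> K -> Prop) (U : (nat -> K) -> Prop) : Prop :=
  openKG G U /\ closedKG G U.

Definition interiorKG (K : Type) (G : K -> K -> Prop) (U : (nat -> K) -> Prop)
  (x : nat -> K) : Prop :=
  inKG G x /\ exists k, forall y, inKG G y -> close k x y -> U y.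

Definition isOpenIn (K : Type) (Y U : (nat -> K) -> Prop) : Prop :=
  (forall x, U x -> Y x) /\
  forall x, U x -> exists k, forall y, Y y -> close k x y -> U y.

Definition topTransitive (K : Type) (Y : (nat -> K) -> Prop) : Prop :=
  forall U V, isOpenIn Y U -> isOpenIn Y V ->
    (exists x, U x) -> (exists x, V x) ->
    exists n x, (0 < n)%N /\ U x /\ V (shiftn n x).

Definition basin (K : Type) (G : K -> K -> Prop) (C : (nat -> K) -> Prop) (x : nat -> K) : Prop :=
  interiorKG G (fun y => inKG G y /\ forall z, omega y z -> C z) x.

Definition visible (K : Type) (G : K -> K -> Prop) (C : (nat -> K) -> Prop) : Prop :=
  Sbasic G C /\ exists x, basin G C x.

Definition attractor (K : Type) (G : K -> K -> Prop) (C : (nat -> K) -> Prop) : Prop :=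
  exists U : (nat -> K) -> Prop,
    (forall x, U x -> inKG G x) /\ closedKG G U /\
    (forall x, U x -> interiorKG G U (shift x)) /\
    forall y, C y <-> (forall n, exists x, U x /\ shiftn n x = y).

Definition IsEnd (K : Type) (G : K -> K -> Prop) (x : nat -> K) (B : K -> Prop) : Prop :=
  Gbasic G B /\ exists k, forall i, (k <= i)%N -> B (x i) /\ restrG G B (shiftn i x).

From mathcomp Require Import all_boot zify.
From Stdlib Require Import Classical ClassicalEpsilon FunctionalExtensionality.

(* Everything reduces to finite paths of G. Points of K_G that agree on their
   first k coordinates are 1/(k+1)-close, so any prefix of a point can be
   continued by a G-path and then by an arbitrary point of K_G; such splicings
   provide the chains of S, the neighbourhoods in K_G and the orbits needed for
   transitivity.  By finiteness every point eventually stays in one G basic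
   set, and every state leads to a terminal basic set, where the orbit can be
   closed up into a cycle.  If B is not terminal, some state of B leads out of
   B for ever; splicing that escape after an arbitrarily long prefix of a
   point of B_G destroys each of the properties (ii)-(vi) near B_G. *)

Set Implicit Arguments. Unset Strict Implicit. Unset Printing Implicit Defensive.

Definition asbool (P : Prop) : bool :=
  if excluded_middle_informative P then true else false.

Lemma asboolP (P : Prop) : reflect P (asbool P).
Proof. by rewrite /asbool; case: excluded_middle_informative => h; constructor. Qed.

Section Paths.
Variables (K : Type) (G : K -> K -> Prop).

Definition reach (a b : K) := exists m, relpow G m a b.

Lemma relpow_pathP n a b : relpow G n a b <->
  exists p : nat -> K, p 0 = a /\ p n = b /\ forall i, i < n -> G (p i) (p i.+1).
Proof.
split.
- elim: n b => [|n IH] b /=.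
    by move=> ->; exists (fun _ => b).
  case=> u [/IH [p [p0 [pn hp]]] Gub].
  exists (fun i => if i <= n then p i else b); split; first by rewrite leq0n.
  split; first by rewrite ltnn.
  move=> i lti; case: (ltngtP i n) => hin; [exact: hp | lia | by rewrite hin pn].
- elim: n b => [|n IH] b /=; first by case=> p [<- [<- _]].
  case=> p [p0 [pn hp]]; exists (p n); split; last by rewrite -pn; apply: hp.
  apply/IH; exists p; split => //; split => // i lti; apply: hp; lia.
Qed.

Lemma relpow_add m n a b c :
  relpow G m a b -> relpow G n b c -> relpow G (m + n) a c.
Proof.
move=> hab; elim: n c => [|n IH] c /=; first by move=> <-; rewrite addn0.
by case=> u [/IH h Guc]; rewrite addnS /=; exists u.
Qed.

Lemma relpow_seg (p : nat -> K) a b :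
  (forall i, a <= i -> i < b -> G (p i) (p i.+1)) -> a <= b ->
  relpow G (b - a) (p a) (p b).
Proof.
elim: b => [|b IH] hp hab; first by have -> : a = 0 by lia.
case: (ltngtP a b.+1) => h; [|lia|by rewrite h subnn].
rewrite subSn; last lia.
exists (p b); split; last by apply: hp; lia.
apply: IH; last lia.
by move=> i h1 h2; apply: hp; lia.
Qed.

Lemma reach_refl a : reach a a.
Proof. by exists 0. Qed.

Lemma OG_reach a b : OG G a b -> reach a b.
Proof. by case=> n h; exists n.+1. Qed.

Lemma OG_step a b : G a b -> OG G a b.
Proof. by move=> h; exists 0, a. Qed.

Lemma reachE a b : reach a b -> a = b \/ OG G a b.
Proof. by case=> [[|n]] h; [left | right; exists n]. Qed.

Lemma reach_trans a b c : reach a b -> reach b c -> reach a c.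
Proof. by case=> n h [m h']; exists (n + m); apply: relpow_add h h'. Qed.

Lemma OG_reach_trans a b c : OG G a b -> reach b c -> OG G a c.
Proof. by case=> n h [m h']; exists (n + m); have := relpow_add h h'; rewrite addSn. Qed.

Lemma reach_OG_trans a b c : reach a b -> OG G b c -> OG G a c.
Proof. by case=> n h [m h']; exists (n + m); have := relpow_add h h'; rewrite addnS. Qed.

Lemma OG_trans a b c : OG G a b -> OG G b c -> OG G a c.
Proof. by move=> hab /OG_reach; apply: OG_reach_trans. Qed.

Lemma inKG_OG x a b : inKG G x -> a < b -> OG G (x a) (x b).
Proof.
move=> hx ab; exists (b - a).-1; have -> : (b - a).-1.+1 = b - a by lia.
by apply: relpow_seg; [move=> i _ _; apply: hx | lia].
Qed.

Lemma inKG_shiftn n x : inKG G x -> inKG G (shiftn n x).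
Proof. by move=> hx i; rewrite /shiftn addnS; apply: hx. Qed.

Lemma shiftn0 (x : nat -> K) : shiftn 0 x = x.
Proof. exact: functional_extensionality. Qed.

Lemma shiftnS (x : nat -> K) n : shiftn n.+1 x = shift (shiftn n x).
Proof. by apply: functional_extensionality => i; rewrite /shiftn /shift addnS. Qed.

Definition glue (n : nat) (p q : nat -> K) i := if i <= n then p i else q (i - n).

Lemma glue_step p q n i : p n = q 0 -> (i < n -> G (p i) (p i.+1)) ->
  (n <= i -> G (q (i - n)) (q (i - n).+1)) -> G (glue n p q i) (glue n p q i.+1).
Proof.
rewrite /glue => pq hp hq; case: (ltngtP i n) => hin.
- exact: hp.
- by rewrite subSn; [apply: hq | ]; apply: ltnW.
- by move: hq; rewrite hin subnn subSnn pq; apply.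
Qed.

Lemma splice (x y : nat -> K) L n :
  (forall i, i < L -> G (x i) (x i.+1)) -> inKG G y -> relpow G n (x L) (y 0) ->
  exists z, inKG G z /\ (forall i, i <= L -> z i = x i) /\
    (forall i, z (L + n + i) = y i) /\
    (forall i, L <= i -> i <= L + n -> reach (x L) (z i) /\ reach (z i) (y 0)).
Proof.
move=> hx hy /relpow_pathP [p [p0 [pn hp]]].
pose r := glue L x p.
have hr : forall i, i < L + n -> G (r i) (r i.+1).
  move=> i hi; apply: glue_step; [by rewrite p0 | exact: hx | move=> hLi; apply: hp; lia].
have rmid : forall i, L <= i -> r i = p (i - L).
  move=> i hi; rewrite /r /glue; case: (ltngtP i L) => hin //; first lia.
  by rewrite hin subnn p0.
have rend : r (L + n) = y 0 by rewrite rmid ?leq_addr // -pn; congr p; lia.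
exists (glue (L + n) r y); split.
  by move=> i; apply: glue_step; [exact: rend | exact: hr | move=> _; apply: hy].
split.
  by move=> i hi; rewrite {1}/glue ifT ?/r ?/glue ?hi //; lia.
split.
  case=> [|i]; first by rewrite /glue addn0 leqnn.
  by rewrite /glue ifF; [congr y; lia | lia].
move=> i h1 h2; rewrite /glue h2 rmid //; split.
  by rewrite -p0; exists (i - L - 0); apply: relpow_seg => // j _ hj; apply: hp; lia.
rewrite -pn; exists (n - (i - L)); apply: relpow_seg; last lia.
by move=> j _ hj; apply: hp; lia.
Qed.

Lemma splice_from (y : nat -> K) t n : inKG G y -> relpow G n t (y 0) ->
  exists z, inKG G z /\ z 0 = t /\ (forall i, z (n + i) = y i) /\
    (forall i, i <= n -> reach t (z i) /\ reach (z i) (y 0)).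
Proof.
move=> hy htn.
have no_step : forall i, i < 0 -> G ((fun=> t) i) ((fun=> t) i.+1) by [].
have [z [hz [z0 [zy zm]]]] := splice no_step hy htn.
exists z; split => //; split; first exact: z0.
by split; [exact: zy | move=> i hi; apply: zm].
Qed.

Definition Gclass (a t : K) := OG G t t /\ OG G a t /\ OG G t a.

Lemma Gclass_basic a : OG G a a -> Gbasic G (Gclass a).
Proof. by move=> h; exists a. Qed.

Lemma Gclass_terminal u :
  OG G u u -> (forall v, OG G u v -> OG G v u) -> Gterminal G (Gclass u).
Proof.
move=> uu h; split; first exact: Gclass_basic.
move=> a b [_ [ua _]] ab; have ub := OG_trans ua ab.
by split; [exact: OG_trans (h _ ub) ub | split; [|exact: h]].
Qed.

Lemma Gbasic_OG B t u : Gbasic G B -> B t -> B u -> OG G t u.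
Proof. by case=> s [_ hB] /hB [_ [_ ts]] /hB [_ [su _]]; apply: OG_trans ts su. Qed.

Lemma Gbasic_between B t u v :
  Gbasic G B -> B t -> B u -> reach t v -> reach v u -> B v.
Proof.
move=> hb bt bu tv vu; have [s [_ hB]] := hb.
have [_ [st _]] := (hB t).1 bt; have [_ [_ us]] := (hB u).1 bu.
apply/hB; split; last split.
- exact: reach_OG_trans vu (OG_reach_trans (Gbasic_OG hb bu bt) tv).
- exact: OG_reach_trans st tv.
- exact: reach_OG_trans vu us.
Qed.

Lemma Gbasic_eq B B' t :
  Gbasic G B -> Gbasic G B' -> B t -> B' t -> forall u, B u <-> B' u.
Proof.
move=> hb hb' bt bt' u; split => hu.
- by apply: (Gbasic_between hb' bt' bt'); apply: OG_reach;
    [exact: Gbasic_OG hb bt hu | exact: Gbasic_OG hb hu bt].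
- by apply: (Gbasic_between hb bt bt); apply: OG_reach;
    [exact: Gbasic_OG hb' bt' hu | exact: Gbasic_OG hb' hu bt'].
Qed.

Lemma Gbasic_escape B b c v :
  Gbasic G B -> B b -> OG G b c -> ~ B c -> reach c v -> ~ B v.
Proof. by move=> hb bb bc nc cv bv; apply: nc; exact: (Gbasic_between hb bb bv (OG_reach bc) cv). Qed.

Lemma OG_cycle u : OG G u u -> exists w P, 0 < P /\ inKG G w /\ w 0 = u /\
  (forall i, w (i + P) = w i) /\ (forall i, reach u (w i) /\ reach (w i) u).
Proof.
case=> n /relpow_pathP [p [p0 [pn hp]]].
exists (fun i => p (i %% n.+1)), n.+1; split => //; split; last split; last split.
- move=> i /=; have hq := ltn_pmod i (ltn0Sn n).
  have -> : i.+1 = i %/ n.+1 * n.+1 + (i %% n.+1).+1 by rewrite {1}(divn_eq i n.+1) addnS.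
  rewrite modnMDl; case: (ltngtP (i %% n.+1).+1 n.+1) => h; [| lia |].
    by rewrite (modn_small h); apply: hp.
  by rewrite h modnn p0 -pn; have := hp (i %% n.+1) hq; rewrite h.
- by rewrite mod0n.
- by move=> i; rewrite modnDr.
- move=> i; have hq := ltn_pmod i (ltn0Sn n); split.
    by exists (i %% n.+1 - 0); rewrite -{1}p0; apply: relpow_seg => // j _ hj; apply: hp; lia.
  exists (n.+1 - i %% n.+1); rewrite -pn; apply: relpow_seg; last lia.
  by move=> j _ hj; apply: hp; lia.
Qed.

Lemma Gbasic_cycle B t : Gbasic G B -> B t -> exists w P,
  0 < P /\ restrG G B w /\ w 0 = t /\ forall i, w (i + P) = w i.
Proof.
move=> hb bt; have [w [P [hP [hw [w0 [wP wr]]]]]] := OG_cycle (Gbasic_OG hb bt bt).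
exists w, P; do 3!split => //.
by move=> j; have [h1 h2] := wr j; apply: (Gbasic_between hb bt bt h1 h2).
Qed.

Lemma Gbasic_point B : Gbasic G B -> exists x, restrG G B x.
Proof.
move=> hb; have [s [ss /(_ s) hs]] := hb.
have [w [_ [_ [hw _]]]] := Gbasic_cycle hb (hs.2 (conj ss (conj ss ss))).
by exists w.
Qed.

Definition eventually_periodic (z : nat -> K) N P :=
  0 < P /\ forall i, z (N + P + i) = z (N + i).

Lemma eventually_periodic_iter z N P : eventually_periodic z N P ->
  forall m i, z (N + m * P + i) = z (N + i).
Proof.
case=> _ h; elim=> [|m IH] i; first by rewrite mul0n addn0.
by rewrite mulSn addnA -(addnA (N + P)) h addnA IH.
Qed.

Lemma omega_periodic z N P : eventually_periodic z N P -> omega z (shiftn N z).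
Proof.
move=> hz k M; exists (N + M * P); split; first by case: hz; nia.
by move=> i _; rewrite /shiftn eventually_periodic_iter.
Qed.

Lemma omega_inKG y z : inKG G y -> omega y z -> inKG G z.
Proof.
move=> hy hz i; have [n [_ c]] := hz i.+2 0.
by rewrite -c // -c // /shiftn addnS; apply: hy.
Qed.

Lemma omega_tail (A : K -> Prop) x z N :
  inKG G x -> (forall i, N <= i -> A (x i)) -> omega x z -> restrG G A z.
Proof.
move=> hx hA hz; split; first exact: omega_inKG hz.
by move=> j; have [n [hn c]] := hz j.+1 N; rewrite -c //; apply: hA; lia.
Qed.

Lemma chain_of_close k x z y m : inKG G x -> inKG G z -> close k.+1 x z ->
  0 < m -> (forall i, z (m + i) = y i) -> chain G k x y.
Proof.
move=> hx hz cxz hm zy.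
exists m, (fun i => if i == 0 then x else shiftn i z); split => //; split => //.
split; first by rewrite ifF; [exact: functional_extensionality | lia].
split; first by move=> [|i] _ /=; [exact: hx | exact: inKG_shiftn].
move=> [|i] _ j hj /=; rewrite /shift /shiftn; last by congr z; lia.
by rewrite cxz; [congr z; lia | lia].
Qed.

Lemma CS_of_OG x y : inKG G x -> inKG G y ->
  (forall L, OG G (x L) (y 0)) -> CS G x y.
Proof.
move=> hx hy h k; have [n hn] := h k.
have [z [hz [zx [zy _]]]] := splice (fun i _ => hx i) hy hn.
by apply: (chain_of_close hx hz (m := k + n.+1)) => // [i hi|]; [rewrite zx //; lia | lia].
Qed.

Lemma chain_path k x y : 0 < k -> chain G k x y -> exists (p : nat -> K) n,
  0 < n /\ (forall i, G (p i) (p i.+1)) /\ p 0 = x 0 /\ (forall j, p (n + j) = y j) /\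
  (forall j, j <= k -> (j <= n /\ p j = x j) \/ (n < j /\ x j = y (j - n))).
Proof.
move=> hk [n [c [hn [c0 [cn [hc hcl]]]]]].
have claim : forall i, i <= n -> forall m, i + m <= k -> c i m = x (i + m).
  elim=> [|i IH] hi m hm; first by rewrite c0.
  by rewrite -(hcl i hi m) /shift ?IH; [congr x; lia | lia | lia | lia].
exists (fun i => if i <= n then c i 0 else y (i - n)), n.
split => //; split; last split; last split.
- move=> i; case: (ltngtP i n) => hin.
  + by have := hcl i hin 0 hk; rewrite /shift => <-; apply: (hc i (ltnW hin) 0).
  + by rewrite subSn; [rewrite -cn; apply: (hc n (leqnn n)) | apply: ltnW].
  + by rewrite hin subSnn -cn; apply: (hc n (leqnn n) 0).
- by rewrite leq0n c0.
- case=> [|j]; first by rewrite addn0 leqnn cn.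
  by rewrite ifF; [congr y; lia | lia].
- move=> j hj; case: (leqP j n) => hjn; [left | right]; split => //.
    by rewrite claim // addn0.
  by have := claim n (leqnn n) (j - n); rewrite cn => ->; [congr x | ]; lia.
Qed.

Lemma chain_OG k x y : 0 < k -> chain G k x y -> forall j, OG G (x 0) (y j).
Proof.
move=> hk /(chain_path hk) [p [n [hn [hp [p0 [py _]]]]]] j.
exists (n + j).-1; have -> : (n + j).-1.+1 = n + j - 0 by lia.
by rewrite -p0 -py; apply: relpow_seg.
Qed.

Lemma chain_back k x y : 0 < k -> chain G k y x -> forall j, j <= k ->
  reach (y j) (x 0) \/ exists m, m < j /\ y j = x m.
Proof.
move=> hk /(chain_path hk) [p [n [hn [hp [p0 [py hj]]]]]] j jk.
case: (hj j jk) => [[jn pj] | [nj e]].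
  by left; rewrite -pj -(py 0); exists (n + 0 - j); apply: relpow_seg => //; lia.
by right; exists (j - n); split => //; lia.
Qed.

Lemma CS_inKG x y : CS G x y -> inKG G y.
Proof. by case/(_ 0) => n [c [_ [_ [<- [hc _]]]]]; apply: hc. Qed.

Lemma CS_restrG B x y : Gbasic G B -> restrG G B x -> restrG G B y -> CS G x y.
Proof.
move=> hb [hx bx] [hy yy]; apply: CS_of_OG => // L.
exact: Gbasic_OG hb (bx L) (yy 0).
Qed.

Lemma restrG_CS_back B x y :
  Gbasic G B -> restrG G B x -> CS G x y -> CS G y x -> restrG G B y.
Proof.
move=> hb [hx bx] hxy hyx; split; first exact: CS_inKG hxy.
move=> j; have xy := chain_OG (ltn0Sn 0) (hxy 1) j.
case: (chain_back (ltn0Sn j) (hyx j.+1) (leqnSn j)) => [r | [m [_ ->]]] //.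
exact: (Gbasic_between hb (bx 0) (bx 0) (OG_reach xy) r).
Qed.

Lemma CS_refl_restrG x : CS G x x -> restrG G (Gclass (x 0)) x.
Proof.
move=> xx; have x00 : OG G (x 0) (x 0) := chain_OG (ltn0Sn 0) (xx 1) 0.
have hb := Gclass_basic x00.
have b0 : Gclass (x 0) (x 0) by [].
split; first exact: CS_inKG xx.
move=> j; elim: j {-2}j (leqnn j) => [|j IH] i hi; first by have -> : i = 0 by lia.
have xi := chain_OG (ltn0Sn 0) (xx 1) i.
case: (chain_back (ltn0Sn i) (xx i.+1) (leqnSn i)) => [r | [m [mi ->]]].
  exact: (Gbasic_between hb b0 b0 (OG_reach xi) r).
by apply: IH; lia.
Qed.

Lemma Gbasic_Sbasic B : Gbasic G B -> Sbasic G (restrG G B).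
Proof.
move=> hb; have [x hx] := Gbasic_point hb.
exists x; split; first exact: hx.1.
split; first exact: (CS_restrG hb hx hx).
move=> y; split; last by case=> hy [_ [h1 h2]]; apply: restrG_CS_back hb hx h1 h2.
move=> hy; split; first exact: hy.1.
by split; [|split]; apply: CS_restrG hb _ _.
Qed.

Lemma restrG_topTransitive B : Gbasic G B -> topTransitive (restrG G B).
Proof.
move=> hb U V [UY Uo] [VY Vo] [u hu] [v hv].
have [k hk] := Uo u hu.
have [[hU bu] [hV bv]] := (UY u hu, VY v hv).
have [n hn] := Gbasic_OG hb (bu k) (bv 0).
have [z [hz [zu [zv zm]]]] := splice (fun i _ => hU i) hV hn.
have zkv : shiftn (k + n.+1) z = v by apply: functional_extensionality => i; apply: zv.
exists (k + n.+1), z; split; first lia.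
split; last by rewrite zkv.
apply: hk; last by move=> i hi; rewrite zu //; lia.
split => // i; case: (leqP i k) => hik; first by rewrite zu.
case: (leqP i (k + n.+1)) => hin.
  by have [h1 h2] := zm i (ltnW hik) hin; apply: Gbasic_between hb (bu k) (bv 0) h1 h2.
by rewrite -(subnKC (ltnW hin)) zv.
Qed.

Lemma restrG_inj B B' : Gbasic G B -> Gbasic G B' ->
  (forall x, restrG G B x <-> restrG G B' x) -> forall s, B s <-> B' s.
Proof.
move=> hb hb' h s; split => hs.
  by have [w [_ [_ [hw [<- _]]]]] := Gbasic_cycle hb hs; apply: ((h w).1 hw).2.
by have [w [_ [_ [hw [<- _]]]]] := Gbasic_cycle hb' hs; apply: ((h w).2 hw).2.
Qed.

Lemma Sbasic_restrG C : Sbasic G C ->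
  exists B, Gbasic G B /\ forall x, C x <-> restrG G B x.
Proof.
case=> x [hx [xx hC]].
have hb := Gclass_basic (chain_OG (ltn0Sn 0) (xx 1) 0).
have hxB := CS_refl_restrG xx.
exists (Gclass (x 0)); split => // y; rewrite hC; split.
  by case=> hy [_ [h1 h2]]; apply: restrG_CS_back hb hxB h1 h2.
move=> hy; split; first exact: hy.1.
by split; [|split]; apply: CS_restrG hb _ _.
Qed.

Definition OG_closed (A : K -> Prop) := forall s t, A s -> OG G s t -> A t.

Lemma OG_closed_tail A x k :
  OG_closed A -> inKG G x -> A (x k) -> forall i, k <= i -> A (x i).
Proof.
move=> hA hx a i; rewrite leq_eqVlt => /orP [/eqP <- // | ki].
exact: hA a (inKG_OG hx ki).
Qed.

Lemma OG_closed_restrG A x : OG_closed A -> inKG G x -> A (x 0) -> restrG G A x.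
Proof. by move=> hA hx a0; split => // j; apply: (OG_closed_tail hA hx a0). Qed.

Lemma OG_closed_CS A x y :
  OG_closed A -> restrG G A x -> CS G x y -> restrG G A y.
Proof.
move=> hA [hx ax] hxy; apply: OG_closed_restrG (CS_inKG hxy) _ => //.
exact: hA (ax 0) (chain_OG (ltn0Sn 0) (hxy 1) 0).
Qed.

Lemma OG_closed_clopen A : OG_closed A -> clopenKG G (restrG G A).
Proof.
move=> hA; split.
  move=> x hx [_ ax]; exists 1 => y hy c.
  by apply: OG_closed_restrG => //; rewrite -c.
move=> x hx nx; exists 1 => y hy c [_ ay]; apply: nx.
by apply: OG_closed_restrG => //; rewrite c.
Qed.

Lemma terminal_IsEnd B y k : Gterminal G B -> inKG G y -> B (y k) -> IsEnd G y B.
Proof.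
move=> [hb hB] hy byk; have tail := OG_closed_tail hB hy byk.
split => //; exists k => i hi; split; first exact: tail.
by split; [exact: inKG_shiftn | move=> j; apply: tail; rewrite /shiftn; lia].
Qed.

Lemma restrG_shiftn_surj B y n : Gbasic G B -> restrG G B y ->
  exists x, restrG G B x /\ shiftn n x = y.
Proof.
move=> hb [hy bY].
have [w [P [hP [[hw bw] [w0 wP]]]]] := Gbasic_cycle hb (bY 0).
(* go [n] times round a cycle of [B] through [y 0], then follow [y] *)
have hn : relpow G 0 (w (n * P)) (y 0).
  by rewrite -w0; elim: n => [|n IH] //=; rewrite mulSn addnC wP.
have [z [hz [zw [zy _]]]] := splice (fun i _ => hw i) hy hn.
have zB : forall i, B (z i).
  move=> i; case: (leqP i (n * P + 0)) => hi; first by rewrite zw; [apply: bw | lia].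
  by rewrite -(subnKC (ltnW hi)) zy; apply: bY.
exists (shiftn (n * P - n) z); split.
  by split; [exact: inKG_shiftn | move=> i; apply: zB].
by apply: functional_extensionality => i; rewrite /shiftn -zy; congr z; nia.
Qed.

Lemma Gterminal_attractor B : Gterminal G B -> attractor G (restrG G B).
Proof.
move=> [hb hB]; exists (restrG G B); split; first by move=> x [].
split; first exact: (OG_closed_clopen hB).2.
split.
  move=> x [hx bx]; split; first exact: (inKG_shiftn 1 hx).
  by exists 1 => y hy c; apply: OG_closed_restrG => //; rewrite -c //; apply: bx 1.
move=> y; split; first by move=> hy n; apply: restrG_shiftn_surj.
by move=> /(_ 0) [x [hx <-]]; rewrite shiftn0.
Qed.

End Paths.

Section Finite.
Variables (K : finType) (G : K -> K -> Prop).

Definition recurrent (x : nat -> K) (s : K) := forall M, exists j, M <= j /\ x j = s.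

Lemma eventually_recurrent (x : nat -> K) :
  exists N, forall i, N <= i -> recurrent x (x i).
Proof.
suff: forall l : seq K, exists N, forall i, N <= i -> x i \in l -> recurrent x (x i).
  by case/(_ (enum K)) => N h; exists N => i hi; apply: h; rewrite ?mem_enum.
elim=> [|s l [N1 IH]]; first by exists 0.
case: (classic (recurrent x s)) => hs.
  by exists N1 => i hi; rewrite in_cons => /orP [/eqP -> // | hl]; apply: IH.
have [M hM] := not_all_ex_not _ _ hs.
exists (maxn N1 M) => i hi; rewrite in_cons => /orP [/eqP e | hl]; last by apply: IH => //; lia.
by exfalso; apply: hM; exists i; split; [lia | ].
Qed.

Lemma End_exists x : inKG G x ->
  exists B, IsEnd G x B /\ forall z, omega x z -> restrG G B z.
Proof.
move=> hx; have [N hN] := eventually_recurrent x.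
have later : forall i j, N <= i -> OG G (x j) (x i).
  by move=> i j hi; have [m [hm <-]] := hN i hi j.+1; apply: inKG_OG hx hm.
have inB : forall i, N <= i -> Gclass G (x N) (x i).
  by move=> i hi; split; [|split]; apply: later.
have hb : Gbasic G (Gclass G (x N)) by apply: Gclass_basic; apply: later.
exists (Gclass G (x N)); split; last by move=> z; apply: omega_tail hx inB.
split => //; exists N => i hi; split; first exact: inB.
by split; [exact: inKG_shiftn | move=> j; apply: inB; rewrite /shiftn; lia].
Qed.

Lemma IsEnd_unique x B B' : IsEnd G x B -> IsEnd G x B' -> forall s, B s <-> B' s.
Proof.
move=> [hb [k hk]] [hb' [k' hk']].
apply: (Gbasic_eq hb hb' (hk (maxn k k') (leq_maxl _ _)).1).
exact: (hk' (maxn k k') (leq_maxr _ _)).1.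
Qed.

Lemma OG_closed_End_open A : OG_closed G A ->
  openKG G (fun x => inKG G x /\ exists B, IsEnd G x B /\ forall s, B s -> A s).
Proof.
move=> hA x hx [_ [B [[hb [k hk]] BA]]]; exists k.+1 => y hy c; split => //.
have yk : A (y k) by rewrite -c //; apply: BA; apply: (hk k (leqnn k)).1.
have [B' [[hb' [k' hk']] _]] := End_exists hy.
exists B'; split; first by split => //; exists k'.
move=> b bb; have ym := (hk' (maxn k k') (leq_maxr _ _)).1.
exact: hA (OG_closed_tail hA hy yk (leq_maxl k k')) (Gbasic_OG hb' ym bb).
Qed.

Hypothesis hDom : forall s : K, exists t, G s t.

(* The set of states reachable from a state strictly shrinks along any step that
   cannot be undone, so this descent stops at a state of a terminal class. *)
Lemma reach_terminal s :
  exists u, reach G s u /\ OG G u u /\ forall v, OG G u v -> OG G v u.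
Proof.
pose R t := [pred v | asbool (reach G t v)].
suff: forall n t, #|R t| <= n ->
    exists u, reach G t u /\ OG G u u /\ forall v, OG G u v -> OG G v u.
  by apply; apply: leqnn.
elim=> [|n IH] t ht.
  suff : 0 < #|R t| by lia.
  by apply/card_gt0P; exists t; rewrite inE; apply/asboolP; apply: reach_refl.
case: (classic (forall v, OG G t v -> OG G v t)) => h.
  exists t; split; first exact: reach_refl.
  have [t' tt'] := hDom t; have h1 := OG_step tt'.
  by split; [exact: OG_trans h1 (h _ h1) | exact: h].
have [v hv] := not_all_ex_not _ _ h; have [tv nvt] := imply_to_and _ _ hv.
have hlt : #|R v| < #|R t|.
  apply: proper_card; apply/properP; split.
    apply/subsetP => w; rewrite !inE => /asboolP hw; apply/asboolP.
    exact: reach_trans (OG_reach tv) hw.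
  exists t; rewrite !inE; first by apply/asboolP; apply: reach_refl.
  by apply/negP => /asboolP vt; case: (reachE vt) => [e | //]; subst v.
have [u [vu hu]] := IH v (ltnSE (leq_trans hlt ht)).
by exists u; split => //; apply: reach_trans (OG_reach tv) vu.
Qed.

Lemma terminal_orbit t : exists y N P, inKG G y /\ y 0 = t /\
  eventually_periodic y N P /\ (forall i, reach G t (y i)) /\
  IsEnd G y (Gclass G (y N)) /\ Gterminal G (Gclass G (y N)).
Proof.
have [u [[n tu] [uu hu]]] := reach_terminal t.
have [w [P [hP [hw [w0 [wP wr]]]]]] := OG_cycle uu.
rewrite -w0 in tu.
have [z [hz [z0 [zw zm]]]] := splice_from hw tu.
have ztail : forall i, n <= i -> z i = w (i - n) by move=> i hi; rewrite -zw; congr z; lia.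
have zn : z n = u by rewrite ztail // subnn.
have hterm : Gterminal G (Gclass G (z n)) by rewrite zn; apply: Gclass_terminal.
have zB : Gclass G (z n) (z n) by rewrite zn.
exists z, n, P; do 2!split => //.
split.
  split => // i; rewrite !ztail; [|lia|lia].
  by rewrite -addnA !addKn addnC.
split; last by split; [exact: terminal_IsEnd hterm hz zB | exact: hterm].
move=> i; case: (leqP i n) => hi; first by have [] := zm i hi.
rewrite ztail; last lia.
by apply: reach_trans (wr _).1; exists n; rewrite -w0.
Qed.

Lemma terminal_End_exists s :
  exists x, inKG G x /\ x 0 = s /\ exists B, IsEnd G x B /\ Gterminal G B.
Proof.
have [y [N [_ [hy [y0 [_ [_ [he ht]]]]]]]] := terminal_orbit s.
by exists y; split => //; split => //; exists (Gclass G (y N)).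
Qed.

Lemma OG_closedE A :
  OG_closed G A <-> (forall x, inKG G x -> (restrG G A x <-> A (x 0))).
Proof.
split.
  move=> hA x hx; split; first by case=> _; apply.
  exact: OG_closed_restrG.
move=> h s t As [n hn].
have [y [_ [_ [hy [y0 _]]]]] := terminal_orbit t.
rewrite -y0 in hn.
have [z [hz [z0 [zy _]]]] := splice_from hy hn.
have := zy 0; rewrite addn0 y0 => <-.
by have := (h z hz).2; rewrite z0 => /(_ As) [_]; apply.
Qed.

Lemma continue_near x L t : inKG G x -> reach G (x L) t -> exists z N P,
  inKG G z /\ close L.+1 x z /\ eventually_periodic z N P /\
  forall i, N <= i -> reach G t (z i).
Proof.
move=> hx [n hn].
have [y [N [P [hy [y0 [[hP yP] [yr _]]]]]]] := terminal_orbit t.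
rewrite -y0 in hn.
have [z [hz [zx [zy _]]]] := splice (fun i _ => hx i) hy hn.
have ztail : forall i, L + n <= i -> z i = y (i - (L + n)).
  by move=> i hi; rewrite -zy; congr z; lia.
exists z, (L + n + N), P; split => //; split; first by move=> i hi; rewrite zx //; lia.
split; last by move=> i hi; rewrite ztail; [apply: yr | lia].
split => // i; rewrite !ztail; [|lia|lia].
have -> : L + n + N + P + i - (L + n) = N + P + i by lia.
by have -> : L + n + N + i - (L + n) = N + i by lia.
Qed.

(* If [B] is not terminal, some eventually periodic orbit near [x] leaves [B]
   for ever; so a property of nearby orbits that forces them back into [B]
   makes [B] terminal. *)
Lemma Gterminal_of_near B x L b :
  Gbasic G B -> inKG G x -> B b -> reach G (x L) b ->
  (forall z N P, inKG G z -> close L.+1 x z -> eventually_periodic z N P ->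
     exists i, N <= i /\ B (z i)) ->
  Gterminal G B.
Proof.
move=> hb hx bb xb near; split => // b' c bb' bc; apply: NNPP => nc.
have xc : reach G (x L) c.
  exact: OG_reach (reach_OG_trans xb (OG_trans (Gbasic_OG hb bb bb') bc)).
have [z [N [P [hz [cz [hper zr]]]]]] := continue_near hx xc.
have [i [hi bz]] := near z N P hz cz hper.
exact: Gbasic_escape hb bb' bc nc (zr i hi) bz.
Qed.

Lemma Gterminal_SterminalE B : Gbasic G B -> Gterminal G B <-> Sterminal G (restrG G B).
Proof.
move=> hb; split.
  case=> _ hB; split; [exact: Gbasic_Sbasic | move=> x y; exact: OG_closed_CS].
case=> _ hS; split => // b c bb bc.
have [x hx] := Gbasic_point hb.
have [y [_ [_ [hy [y0 _]]]]] := terminal_orbit c.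
rewrite -y0; apply: ((hS x y hx _).2 0); apply: CS_of_OG => // [|L]; first exact: hx.1.
by rewrite y0; apply: OG_trans (Gbasic_OG hb (hx.2 L) bb) bc.
Qed.

Lemma Gterminal_visibleE B : Gbasic G B -> Gterminal G B <-> visible G (restrG G B).
Proof.
move=> hb; split.
  move=> ht; split; first exact: Gbasic_Sbasic.
  have [x hx] := Gbasic_point hb.
  exists x; split; first exact: hx.1.
  exists 1 => y hy c; split => //.
  have ry : restrG G B y by apply: OG_closed_restrG ht.2 hy _; rewrite -c //; apply: hx.2.
  by move=> z; apply: (omega_tail (N := 0) ry.1 (fun i _ => ry.2 i)).
case=> _ [x [hx [k hk]]].
have hitB : forall z N P, inKG G z -> close k.+1 x z -> eventually_periodic z N P -> B (z N).
  move=> z N P hz cz hper; have [_ hw] := hk z hz (fun i hi => cz i (ltnW hi)).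
  by have [_ /(_ 0)] := hw _ (omega_periodic hper); rewrite /shiftn addn0.
have [z [N [P [hz [cz [hper zr]]]]]] := continue_near hx (reach_refl G (x k)).
apply: (Gterminal_of_near hb hx (hitB z N P hz cz hper) (zr N (leqnn N))).
by move=> z' N' P' hz' cz' hper'; exists N'; split; last exact: hitB hper'.
Qed.

Lemma Gterminal_clopenE B : Gbasic G B -> Gterminal G B <-> clopenKG G (restrG G B).
Proof.
move=> hb; split; first by case=> _; apply: OG_closed_clopen.
case=> ho _; have [x hx] := Gbasic_point hb.
have [k hk] := ho x hx.1 hx.
apply: (Gterminal_of_near hb hx.1 (hx.2 k) (reach_refl G _)).
move=> z N P hz cz _; exists N; split => //.
exact: (hk z hz (fun i hi => cz i (ltnW hi))).2.
Qed.

Lemma Gterminal_attractorE B : Gbasic G B -> Gterminal G B <-> attractor G (restrG G B).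
Proof.
move=> hb; split; first exact: Gterminal_attractor.
case=> U [UK [_ [Uint hU]]].
have BU : forall y, restrG G B y -> U y.
  by move=> y /hU /(_ 0) [x [ux e]]; rewrite -e shiftn0.
have Ushiftn : forall n v, U v -> U (shiftn n v).
  elim=> [|n IH] v hv; first by rewrite shiftn0.
  have [hv' [k hk]] := Uint _ (IH v hv).
  by rewrite shiftnS; apply: hk hv' (fun _ _ => erefl).
have [x hx] := Gbasic_point hb.
have [hx1 [k hk]] := Uint x (BU _ hx).
apply: (Gterminal_of_near hb hx1 (hx.2 k.+1) (reach_refl G _)).
move=> z N P hz cz hper; exists N; split => //.
have Uz : U z := hk z hz (fun i hi => cz i (ltnW hi)).
have BzN : restrG G B (shiftn N z).
  apply/hU => n; exists (shiftn (N + n * P - n) z); split; first exact: Ushiftn.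
  apply: functional_extensionality => i; rewrite /shiftn.
  have -> : N + n * P - n + (n + i) = N + n * P + i by case: hper; nia.
  exact: eventually_periodic_iter hper n i.
by have := BzN.2 0; rewrite /shiftn addn0.
Qed.

Lemma Gterminal_End_openE B :
  Gbasic G B -> Gterminal G B <-> openKG G (fun x => inKG G x /\ IsEnd G x B).
Proof.
move=> hb; split.
  move=> ht x hx [_ [_ [k hk]]]; exists k.+1 => y hy c; split => //.
  by apply: (terminal_IsEnd (k := k) ht hy); rewrite -c //; apply: (hk k (leqnn k)).1.
move=> ho; have [x hx] := Gbasic_point hb.
have xB : IsEnd G x B.
  split => //; exists 0 => i _; split; first exact: hx.2.
  by split; [exact: inKG_shiftn hx.1 | move=> j; apply: hx.2].
have [k hk] := ho x hx.1 (conj hx.1 xB).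
apply: (Gterminal_of_near hb hx.1 (hx.2 k) (reach_refl G _)).
move=> z N _ hz cz _; have [_ [_ [k' hk']]] := hk z hz (fun i hi => cz i (ltnW hi)).
by exists (N + k'); split; [lia | apply: (hk' _ (leq_addl _ _)).1].
Qed.

Lemma terminal_End_open :
  openKG G (fun x => inKG G x /\ exists B, IsEnd G x B /\ Gterminal G B).
Proof.
move=> x hx [_ [B [hE ht]]].
have [k hk] := (Gterminal_End_openE hE.1).1 ht x hx (conj hx hE).
by exists k => y hy c; have [_ hyE] := hk y hy c; split => //; exists B.
Qed.

Lemma terminal_End_dense x k : inKG G x -> exists y, inKG G y /\ close k x y /\
  inKG G y /\ exists B, IsEnd G y B /\ Gterminal G B.
Proof.
move=> hx; have [y [hy [y0 [B [[_ [m hm]] ht]]]]] := terminal_End_exists (x k).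
have [z [hz [zx [zy _]]]] := splice (fun i _ => hx i) hy (esym y0 : relpow G 0 (x k) (y 0)).
exists z; split => //; split; first by move=> i hi; rewrite zx //; lia.
split => //; exists B; split => //; apply: (terminal_IsEnd (k := k + 0 + m) ht hz).
by rewrite zy; apply: (hm m (leqnn m)).1.
Qed.

End Finite.

Theorem proposition3p1 (K : finType) (G : K -> K -> Prop)
  (hDom : forall s : K, exists t, G s t) :
  (* (a) *)
  (forall x, inKG G x ->
     (exists B, IsEnd G x B /\ forall z, omega x z -> restrG G B z) /\
     (forall B B', IsEnd G x B -> IsEnd G x B' -> forall s, B s <-> B' s)) /\
  (* (b) *)
  ((forall B, Gbasic G B -> Sbasic G (restrG G B) /\ topTransitive (restrG G B)) /\
   (forall B B', Gbasic G B -> Gbasic G B' ->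
      (forall x, restrG G B x <-> restrG G B' x) -> forall s, B s <-> B' s) /\
   (forall C, Sbasic G C -> exists B, Gbasic G B /\ forall x, C x <-> restrG G B x)) /\
  (* (c) *)
  (forall A : K -> Prop,
     ((forall s t, A s -> OG G s t -> A t) <->
      (forall x, inKG G x -> (restrG G A x <-> A (x 0)))) /\
     ((forall s t, A s -> OG G s t -> A t) ->
        (forall x y, restrG G A x -> CS G x y -> restrG G A y) /\
        clopenKG G (restrG G A) /\
        openKG G (fun x => inKG G x /\ exists B, IsEnd G x B /\ forall s, B s -> A s))) /\
  (* (d) *)
  (forall s : K, exists x, inKG G x /\ x 0 = s /\ exists B, IsEnd G x B /\ Gterminal G B) /\
  (* (e) *)
  (forall B, Gbasic G B ->
     (Gterminal G B <-> Sterminal G (restrG G B)) /\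
     (Gterminal G B <-> visible G (restrG G B)) /\
     (Gterminal G B <-> clopenKG G (restrG G B)) /\
     (Gterminal G B <-> attractor G (restrG G B)) /\
     (Gterminal G B <-> openKG G (fun x => inKG G x /\ IsEnd G x B))) /\
  (* (f) *)
  (let D := fun x => inKG G x /\ exists B, IsEnd G x B /\ Gterminal G B in
   openKG G D /\
   forall x, inKG G x -> forall k, exists y, inKG G y /\ close k x y /\ D y).
Proof.
split; first by move=> x hx; split; [exact: End_exists | exact: IsEnd_unique].
split.
  split; first by move=> B hB; split; [exact: Gbasic_Sbasic | exact: restrG_topTransitive].
  by split; [exact: restrG_inj | exact: Sbasic_restrG].
split.
  move=> A; split; first exact: OG_closedE.
  move=> hA; split; first by move=> x y; exact: OG_closed_CS.
  by split; [exact: OG_closed_clopen | exact: OG_closed_End_open].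
split; first exact: terminal_End_exists.
split.
  move=> B hB; split; first exact: Gterminal_SterminalE.
  split; first exact: Gterminal_visibleE.
  split; first exact: Gterminal_clopenE.
  by split; [exact: Gterminal_attractorE | exact: Gterminal_End_openE].
by split; [exact: terminal_End_open | move=> x hx k; exact: terminal_End_dense].
Qed.
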